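(* Let $0<r<1$ and let $T$ be an invertible operator on a Hilbert space $\mathcal H$. Then $T\in C_{1,r}$ if and only if there exist a Hilbert space $\mathcal K$, an isometry $V:\mathcal H\to\mathcal K$ and an invertible operator $J\in\mathcal C_{1,r}$ on $\mathcal K$ such that $T^n=V^*J^nV$ for all integers $n$.
   Context: $C_{1,r}=\{T: T\text{ invertible},\ \|T\|\le1,\ \|rT^{-1}\|\le1\}$. $\mathcal C_{1,r}$ is the class of operators $J$ on a Hilbert space $\mathcal K$ for which there exist orthogonal projections $P_0,P_1$ on $\mathcal K$ with $P_0+P_1=I_{\mathcal K}$ and $J^*J=P_0+r^2P_1$ (equivalently, for invertible $J$, $(1+r^2)I-J^*J-r^2J^{-1}(J^{-1})^*=0$). *)

From mathcomp Require Import all_boot all_order all_algebra.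
From mathcomp Require Import complex reals.
Set Implicit Arguments. Unset Strict Implicit. Unset Printing Implicit Defensive.
Import Order.TTheory GRing.Theory Num.Theory.
Local Open Scope ring_scope.

Record Hilbert (R : realType) := Hilbert_ {
  hsort :> lmodType R[i];
  hinner : hsort -> hsort -> R[i];
  hinnerDl : forall (a : R[i]) (x y z : hsort),
      hinner (a *: x + y) z = a * hinner x z + hinner y z;
  hinnerC : forall x y : hsort, hinner y x = (hinner x y)^*;
  hinner_ge0 : forall x : hsort, 0 <= hinner x x;
  hinner_eq0 : forall x : hsort, hinner x x = 0 -> x = 0;
  hcomplete : forall u : nat -> hsort,
      (forall e : R, 0 < e -> exists N : nat, forall m n : nat,
          (N <= m)%N -> (N <= n)%N ->
          Num.sqrt (complex.Re (hinner (u m - u n) (u m - u n))) < e) ->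
      exists l : hsort, forall e : R, 0 < e -> exists N : nat, forall n : nat,
          (N <= n)%N -> Num.sqrt (complex.Re (hinner (u n - l) (u n - l))) < e
}.

Section Ops.
Variable R : realType.

Definition inner (H : Hilbert R) (x y : H) : R[i] := hinner x y.
Definition hnorm (H : Hilbert R) (x : H) : R :=
  Num.sqrt (complex.Re (hinner x x)).

Definition bounded_op (H K : Hilbert R) (f : H -> K) : Prop :=
  (forall (a : R[i]) (x y : H), f (a *: x + y) = a *: f x + f y) /\
  exists M : R, forall x : H, hnorm (f x) <= M * hnorm x.

Definition is_inverse (H : Hilbert R) (T S : H -> H) : Prop :=
  bounded_op T /\ bounded_op S /\ (forall x, S (T x) = x) /\ (forall x, T (S x) = x).

Definition invertible_op (H : Hilbert R) (T : H -> H) : Prop :=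
  exists S, is_inverse T S.

Definition is_adjoint (H K : Hilbert R) (T : H -> K) (Ts : K -> H) : Prop :=
  bounded_op T /\ bounded_op Ts /\
  forall (x : H) (y : K), inner (T x) y = inner x (Ts y).

Definition opnorm_le (H K : Hilbert R) (A : H -> K) (c : R) : Prop :=
  forall x : H, hnorm (A x) <= c * hnorm x.

Definition hisometry (H K : Hilbert R) (V : H -> K) : Prop :=
  bounded_op V /\ forall x : H, hnorm (V x) = hnorm x.

Definition orth_proj (H : Hilbert R) (P : H -> H) : Prop :=
  bounded_op P /\ (forall x, P (P x) = P x) /\
  (forall x y, inner (P x) y = inner x (P y)).

Definition zpow (H : Hilbert R) (T S : H -> H) (n : int) : H -> H :=
  match n with
  | Posz k => iter k T
  | Negz k => iter k.+1 S
  end.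

Definition C1r (r : R) (H : Hilbert R) (T : H -> H) : Prop :=
  exists S : H -> H, is_inverse T S /\ opnorm_le T 1 /\
    opnorm_le (fun x => (r%:C)%C *: S x) 1.

Definition calC1r (r : R) (K : Hilbert R) (J : K -> K) : Prop :=
  bounded_op J /\
  exists (Js P0 P1 : K -> K), is_adjoint J Js /\ orth_proj P0 /\ orth_proj P1 /\
    (forall x, P0 x + P1 x = x) /\
    (forall x, Js (J x) = P0 x + ((r ^+ 2)%:C)%C *: P1 x).

End Ops.

(* For T in C_{1,r}, the positive operator S = T^* T satisfies r^2 <= S <= 1, so
   (1 - S)(S - r^2) has a self-adjoint square root D commuting with S.  On H (+) H
   the operator J = [[T, T^*^-1 D], [0, r T^*^-1]] then satisfies J^* J = P0 + r^2 P1
   for two complementary orthogonal projections, and H (+) 0 is invariant under J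
   and J^-1, which act there as T and T^-1; hence V x = (x, 0) gives T^n = V^* J^n V.
   Conversely, J^* J = P0 + r^2 P1 forces r |z| <= |J z| <= |z|, and compressing the
   cases n = 1 and n = -1 to H gives |T| <= 1 and |r T^-1| <= 1.
   Adjoints come from the Riesz representation theorem, and the square root from the
   monotone iteration W := (B + W^2) / 2, whose limit is 1 - sqrt (1 - B). *)

From HB Require Import structures.
From mathcomp Require Import all_boot all_order all_algebra.
From mathcomp Require Import complex reals.
From mathcomp Require Import ring lra.
From mathcomp Require boolp.
Import Order.TTheory GRing.Theory Num.Theory.
Local Open Scope ring_scope.
Set Implicit Arguments. Unset Strict Implicit. Unset Printing Implicit Defensive.

Section ComplexScalars.
Variable R : realType.
Implicit Types (c : R) (z w : R[i]).

Lemma ReD z w : complex.Re (z + w) = complex.Re z + complex.Re w.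
Proof. by case: z; case: w. Qed.
Lemma ReN z : complex.Re (- z) = - complex.Re z.
Proof. by case: z. Qed.
Lemma ReB z w : complex.Re (z - w) = complex.Re z - complex.Re w.
Proof. by rewrite ReD ReN. Qed.
Lemma ImB z w : complex.Im (z - w) = complex.Im z - complex.Im w.
Proof. by case: z; case: w. Qed.
Lemma ReCM c z : complex.Re (c%:C%C * z) = c * complex.Re z.
Proof. by case: z => a b /=; ring. Qed.
Lemma ReJ z : complex.Re z^* = complex.Re z.
Proof. by case: z. Qed.
Lemma conjC_real c : (c%:C%C)^* = c%:C%C :> R[i].
Proof. by apply/eqP; rewrite eq_complex /= oppr0 !eqxx. Qed.
Lemma Re_conji_mul z : complex.Re ('i%C^* * z) = complex.Im z.
Proof. by case: z => a b /=; ring. Qed.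
Lemma complex_eq0 z : complex.Re z = 0 -> complex.Im z = 0 -> z = 0.
Proof. by case: z => a b /= -> ->. Qed.
Lemma Re_neq0 z : complex.Re z != 0 -> z != 0.
Proof. by apply: contra => /eqP ->. Qed.
Lemma ge0_complex z : 0 <= z -> z = (complex.Re z)%:C%C /\ 0 <= complex.Re z.
Proof. by case: z => a b; rewrite lecE /= => /andP [/eqP -> ->]. Qed.

End ComplexScalars.

Section InnerProduct.
Variable R : realType.
Variable H : Hilbert R.
Implicit Types (x y z : H) (a : R[i]) (c : R).
Local Notation ip := (@hinner R H).
Local Notation nrm := (@hnorm R H).
Local Notation Re := (@complex.Re R).

Lemma ip0l y : ip 0 y = 0.
Proof.
have := hinnerDl 1 (0 : H) 0 y; rewrite scale1r addr0 mul1r => h.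
by apply: (addrI (ip 0 y)); rewrite addr0 -h.
Qed.
Lemma ipDl x y z : ip (x + y) z = ip x z + ip y z.
Proof. by have := hinnerDl 1 x y z; rewrite scale1r mul1r. Qed.
Lemma ipZl a x z : ip (a *: x) z = a * ip x z.
Proof. by have := hinnerDl a x 0 z; rewrite addr0 ip0l addr0. Qed.
Lemma ipNl x z : ip (- x) z = - ip x z.
Proof. by rewrite -scaleN1r ipZl mulN1r. Qed.
Lemma ipBl x y z : ip (x - y) z = ip x z - ip y z.
Proof. by rewrite ipDl ipNl. Qed.
Lemma ipDr x y z : ip z (x + y) = ip z x + ip z y.
Proof. by rewrite hinnerC ipDl rmorphD /= -!hinnerC. Qed.
Lemma ipZr a x z : ip z (a *: x) = a^* * ip z x.
Proof. by rewrite hinnerC ipZl rmorphM /= -hinnerC. Qed.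
Lemma ip0r y : ip y 0 = 0.
Proof. by rewrite hinnerC ip0l rmorph0. Qed.
Lemma ipNr x z : ip z (- x) = - ip z x.
Proof. by rewrite hinnerC ipNl rmorphN /= -hinnerC. Qed.
Lemma ipBr x y z : ip z (x - y) = ip z x - ip z y.
Proof. by rewrite ipDr ipNr. Qed.
Lemma ipCZr c x z : ip z (c%:C%C *: x) = c%:C%C * ip z x.
Proof. by rewrite ipZr conjC_real. Qed.
Lemma Re_ipC x y : Re (ip y x) = Re (ip x y).
Proof. by rewrite hinnerC ReJ. Qed.

Lemma ip_eql x y : (forall z, ip x z = ip y z) -> x = y.
Proof.
move=> h; apply/eqP; rewrite -subr_eq0; apply/eqP/hinner_eq0.
by rewrite ipBl h subrr.
Qed.
Lemma ip_eqr x y : (forall z, ip z x = ip z y) -> x = y.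
Proof. by move=> h; apply: ip_eql => z; rewrite hinnerC h -hinnerC. Qed.

Lemma hnorm_ge0 x : 0 <= nrm x.
Proof. exact: sqrtr_ge0. Qed.
Lemma hnorm_sqr x : nrm x ^+ 2 = Re (ip x x).
Proof. by rewrite /hnorm sqr_sqrtr //; case: (ge0_complex (hinner_ge0 x)). Qed.
Lemma ip_self x : ip x x = (nrm x ^+ 2)%:C%C.
Proof. by rewrite hnorm_sqr; case: (ge0_complex (hinner_ge0 x)). Qed.
Lemma hnorm0 : nrm 0 = 0.
Proof. by rewrite /hnorm ip0l sqrtr0. Qed.
Lemma hnorm_eq0 x : nrm x = 0 -> x = 0.
Proof.
move=> h; apply: hinner_eq0; rewrite ip_self h expr0n /=.
by apply/eqP; rewrite eq_complex /= !eqxx.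
Qed.
Lemma hnormN x : nrm (- x) = nrm x.
Proof. by rewrite /hnorm ipNl ipNr opprK. Qed.
Lemma hnormB_sym x y : nrm (x - y) = nrm (y - x).
Proof. by rewrite -hnormN opprB. Qed.
Lemma hnormCZ c x : nrm (c%:C%C *: x) = `|c| * nrm x.
Proof.
by rewrite /hnorm ipZl ipCZr !ReCM mulrA -expr2 sqrtrM ?sqr_ge0 // sqrtr_sqr.
Qed.
Lemma hnormiZ x : nrm ('i%C *: x) = nrm x.
Proof.
rewrite /hnorm ipZl ipZr mulrA.
suff -> : 'i%C * 'i%C^* = 1 :> R[i] by rewrite mul1r.
by apply/eqP; rewrite eq_complex /=; apply/andP; split; apply/eqP; ring.
Qed.

Lemma hnorm_sqrD c x y :
  nrm (x + c%:C%C *: y) ^+ 2 = nrm x ^+ 2 + 2 * c * Re (ip x y) + c ^+ 2 * nrm y ^+ 2.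
Proof. by rewrite !hnorm_sqr !(ipDl, ipDr, ipZl, ipCZr) !ReD !ReCM (Re_ipC x y); ring. Qed.

Lemma parallelogram x y :
  nrm (x + y) ^+ 2 + nrm (x - y) ^+ 2 = 2 * nrm x ^+ 2 + 2 * nrm y ^+ 2.
Proof.
have := hnorm_sqrD 1 x y; have := hnorm_sqrD (-1) x y.
have -> : (-1 : R)%:C%C = -1 :> R[i] by apply/eqP; rewrite eq_complex /= oppr0 !eqxx.
rewrite scale1r scaleN1r => -> ->; ring.
Qed.

Lemma Re_ip_le x y : Re (ip x y) <= nrm x * nrm y.
Proof.
have [/hnorm_eq0 ->|ny0] := eqVneq (nrm y) 0.
  by rewrite ip0r mulr_ge0 ?hnorm_ge0.
have ny : 0 < nrm y by rewrite lt_def ny0 hnorm_ge0.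
set a := Re (ip x y); set t := - a / nrm y ^+ 2.
have := sqr_ge0 (nrm (x + t%:C%C *: y)); rewrite hnorm_sqrD -/a.
have -> : nrm x ^+ 2 + 2 * t * a + t ^+ 2 * nrm y ^+ 2 = nrm x ^+ 2 - a ^+ 2 / nrm y ^+ 2.
  by rewrite /t; field.
rewrite subr_ge0 ler_pdivrMr ?exprn_gt0 // -exprMn => h.
have := hnorm_ge0 x; have : 0 <= nrm x * nrm y by rewrite mulr_ge0 ?hnorm_ge0.
nra.
Qed.

Lemma norm_Re_ip_le x y : `|Re (ip x y)| <= nrm x * nrm y.
Proof.
have := Re_ip_le (- x) y; rewrite ipNl ReN hnormN ler_norml => h.
by rewrite Re_ip_le andbT lerNl.
Qed.

Lemma hnormD x y : nrm (x + y) <= nrm x + nrm y.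
Proof.
have := hnorm_sqrD 1 x y; rewrite scale1r => h.
have := Re_ip_le x y; have := hnorm_ge0 (x + y); have := hnorm_ge0 x.
have := hnorm_ge0 y; nra.
Qed.

Lemma hnormB_le x y z : nrm (x - z) <= nrm (x - y) + nrm (y - z).
Proof. by have := hnormD (x - y) (y - z); rewrite addrA subrK. Qed.

Lemma hnormZ_le a x : nrm (a *: x) <= (`|complex.Re a| + `|complex.Im a|) * nrm x.
Proof.
have -> : a *: x = (complex.Re a)%:C%C *: x + (complex.Im a)%:C%C *: ('i%C *: x).
  rewrite scalerA -scalerDl; congr (_ *: _).
  by case: a => p q; apply/eqP; rewrite eq_complex /=; apply/andP; split; apply/eqP; ring.
by apply: le_trans (hnormD _ _) _; rewrite !hnormCZ hnormiZ mulrDl.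
Qed.

End InnerProduct.

Section BoundedOperators.
Variable R : realType.
Local Notation nrm := (@hnorm R _).

Definition hbounded (H K : Hilbert R) (f : H -> K) :=
  exists M : R, 0 <= M /\ forall x, hnorm (f x) <= M * hnorm x.

Lemma bounded_opP (H K : Hilbert R) (f : H -> K) :
  bounded_op f <-> linear f /\ hbounded f.
Proof.
split=> [[lf [M hM]]|[lf [M [_ hM]]]]; last by split=> //; exists M.
split=> //; exists `|M|; split=> // x.
by apply: le_trans (hM x) _; rewrite ler_wpM2r ?hnorm_ge0 ?ler_norm.
Qed.

Lemma adjoint_bounded (H K : Hilbert R) (V : H -> K) (Vs : K -> H) (M : R) :
  0 <= M -> (forall x, hnorm (V x) <= M * hnorm x) ->
  (forall x y, hinner (V x) y = hinner x (Vs y)) ->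
  forall y, hnorm (Vs y) <= M * hnorm y.
Proof.
move=> M0 hV adj y.
have h : hnorm (Vs y) ^+ 2 <= M * hnorm (Vs y) * hnorm y.
  rewrite hnorm_sqr -adj; apply: le_trans (Re_ip_le _ _) _.
  by rewrite ler_wpM2r ?hnorm_ge0.
have [->|] := eqVneq (hnorm (Vs y)) 0; first by rewrite mulr_ge0 ?hnorm_ge0.
have := hnorm_ge0 (Vs y); have := hnorm_ge0 y; nra.
Qed.

Variable H : Hilbert R.
Implicit Types (x y : H).

Record bop := BOp {
  bop_fun :> H -> H;
  bop_linear : linear bop_fun;
  bop_bounded : hbounded bop_fun }.

Lemma bopP (f : bop) a x y : f (a *: x + y) = a *: f x + f y.
Proof. exact: bop_linear. Qed.
Lemma bop0 (f : bop) : f 0 = 0.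
Proof. by have := bopP f (-1) 0 0; rewrite scaler0 addr0 scaleN1r addNr. Qed.
Lemma bopD (f : bop) x y : f (x + y) = f x + f y.
Proof. by have := bopP f 1 x y; rewrite !scale1r. Qed.
Lemma bopZ (f : bop) a x : f (a *: x) = a *: f x.
Proof. by have := bopP f a x 0; rewrite !addr0 bop0 addr0. Qed.
Lemma bopN (f : bop) x : f (- x) = - f x.
Proof. by rewrite -scaleN1r bopZ scaleN1r. Qed.
Lemma bopB (f : bop) x y : f (x - y) = f x - f y.
Proof. by rewrite bopD bopN. Qed.

Lemma bop_bounded_op (f : bop) : bounded_op f.
Proof. exact/bounded_opP/(conj (bop_linear f) (bop_bounded f)). Qed.

Lemma bop_is_inverse (T S : bop) :
  (forall x, S (T x) = x) -> (forall x, T (S x) = x) -> is_inverse T S.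
Proof. by move=> ST TS; split; [|split; [|split]] => //; exact: bop_bounded_op. Qed.

Lemma bop_is_adjoint (T Ts : bop) :
  (forall x y, hinner (T x) y = hinner x (Ts y)) -> is_adjoint T Ts.
Proof. by move=> adj; split; [|split] => //; exact: bop_bounded_op. Qed.

Lemma bop_orth_proj (P : bop) : (forall x, P (P x) = P x) ->
  (forall x y, hinner (P x) y = hinner x (P y)) -> orth_proj P.
Proof. by move=> idem sa; split; [|split] => //; exact: bop_bounded_op. Qed.

Lemma bop_lipschitz (f : bop) :
  exists M, 0 <= M /\ forall x y, nrm (f x - f y) <= M * nrm (x - y).
Proof.
case: (bop_bounded f) => M [M0 hM]; exists M; split=> // x y.
by rewrite -bopB; exact: hM.
Qed.

Lemma bop_comp_linear (f g : bop) : linear (fun x => f (g x)).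
Proof. by move=> a x y; rewrite !bopP. Qed.
Lemma bop_comp_bounded (f g : bop) : hbounded (fun x => f (g x)).
Proof.
case: (bop_bounded f) => M [M0 hM]; case: (bop_bounded g) => N [N0 hN].
exists (M * N); split=> [|x]; first exact: mulr_ge0.
by apply: le_trans (hM _) _; rewrite -mulrA ler_wpM2l.
Qed.
Definition bop_comp f g := BOp (bop_comp_linear f g) (bop_comp_bounded f g).

Lemma bop_add_linear (f g : bop) : linear (fun x => f x + g x).
Proof.
by move=> a x y; rewrite !bopP scalerDr addrACA.
Qed.
Lemma bop_add_bounded (f g : bop) : hbounded (fun x => f x + g x).
Proof.
case: (bop_bounded f) => M [M0 hM]; case: (bop_bounded g) => N [N0 hN].
exists (M + N); split=> [|x]; first exact: addr_ge0.
by apply: le_trans (hnormD _ _) _; rewrite mulrDl lerD.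
Qed.
Definition bop_add f g := BOp (bop_add_linear f g) (bop_add_bounded f g).

Lemma bop_scale_linear (a : R[i]) (f : bop) : linear (fun x => a *: f x).
Proof. by move=> b x y; rewrite bopP scalerDr !scalerA mulrC. Qed.
Lemma bop_scale_bounded (a : R[i]) (f : bop) : hbounded (fun x => a *: f x).
Proof.
case: (bop_bounded f) => M [M0 hM].
have N0 : 0 <= `|complex.Re a| + `|complex.Im a| by rewrite addr_ge0.
exists ((`|complex.Re a| + `|complex.Im a|) * M); split=> [|x]; first exact: mulr_ge0.
by apply: le_trans (hnormZ_le _ _) _; rewrite -mulrA ler_wpM2l.
Qed.
Definition bop_scale a f := BOp (bop_scale_linear a f) (bop_scale_bounded a f).

Lemma bop_id_linear : linear (fun x : H => x). Proof. by []. Qed.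
Lemma bop_id_bounded : hbounded (fun x : H => x).
Proof. by exists 1; split=> // x; rewrite mul1r. Qed.
Definition bop_id := @BOp (fun x => x) bop_id_linear bop_id_bounded.

Lemma bop_zero_linear : linear (fun _ : H => 0 : H).
Proof. by move=> a x y; rewrite scaler0 addr0. Qed.
Lemma bop_zero_bounded : hbounded (fun _ : H => 0 : H).
Proof. by exists 0; split=> // x; rewrite hnorm0 mul0r. Qed.
Definition bop_zero := @BOp (fun _ => 0) bop_zero_linear bop_zero_bounded.

Lemma selfadjoint_contraction (Q : bop) :
  (forall x y, hinner (Q x) y = hinner x (Q y)) ->
  (forall z, `|complex.Re (hinner (Q z) z)| <= nrm z ^+ 2) ->
  forall x, nrm (Q x) <= nrm x.
Proof.
move=> sa hb x; set y := Q x.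
have polar : complex.Re (hinner (Q (x + y)) (x + y)) - complex.Re (hinner (Q (x - y)) (x - y))
    = 4 * nrm y ^+ 2.
  rewrite hnorm_sqr !bopD !bopN !(ipDl, ipNl, ipDr, ipNr) !(ReD, ReN).
  by rewrite [complex.Re (hinner (Q y) x)]Re_ipC -sa; ring.
have := hb (x + y); have := hb (x - y); rewrite !ler_norml.
have := parallelogram x y; have := hnorm_ge0 x; have := hnorm_ge0 y.
move=> g1 g2 p /andP [b1 b1'] /andP [b2 b2'].
have : nrm y ^+ 2 <= nrm x ^+ 2 by lra.
by rewrite ler_pXn2r ?nnegrE.
Qed.

End BoundedOperators.

Section RealSequences.
Variable R : realType.
Implicit Types (e : R) (w : nat -> R).

Lemma invSn_lt e : 0 < e -> exists N, forall n, (N <= n)%N -> n.+1%:R^-1 < e.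
Proof.
move=> e0; exists (Num.Def.archi_bound e^-1) => n hn.
have h1 : e^-1 < (Num.Def.archi_bound e^-1)%:R by rewrite archi_boundP ?invr_ge0 ?ltW.
have h2 : (Num.Def.archi_bound e^-1)%:R <= n.+1%:R :> R by rewrite ler_nat ltnW.
by rewrite -(invrK e) ltf_pV2 ?posrE ?ltr0Sn ?invr_gt0 // (lt_le_trans h1 h2).
Qed.

Lemma nondecreasing_le w :
  (forall n, w n <= w n.+1) -> forall m n, (m <= n)%N -> w m <= w n.
Proof.
move=> h m n /subnK <-; elim: (n - m)%N => [|k ih]; first by rewrite add0n.
by apply: le_trans ih _; rewrite addSn.
Qed.

Lemma nondecreasing_bounded_cauchy w (B : R) :
  (forall n, w n <= w n.+1) -> (forall n, w n <= B) ->
  forall e, 0 < e -> exists N, forall m n, (N <= n)%N -> (n <= m)%N -> w m - w n < e.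
Proof.
move=> winc wB e e0; pose E := fun y => exists n, y = w n.
have neE : classical_sets.nonempty E by exists (w 0), 0%N.
have ubE : classical_sets.has_ubound E by exists B => y [n ->].
have : sup E - e < sup E by rewrite ltrBlDr ltrDl.
case/(sup_gt neE) => y [N ->] hN; exists N => m n hn hm.
have : w m <= sup E by apply: ub_le_sup => //; exists m.
have : w N <= w n by apply: nondecreasing_le.
lra.
Qed.

End RealSequences.

Section Limits.
Variable R : realType.
Variable H : Hilbert R.
Implicit Types (u v : nat -> H) (l m x y : H).
Local Notation nrm := (@hnorm R H).

Definition hcvg u l :=
  forall e : R, 0 < e -> exists N, forall n, (N <= n)%N -> nrm (u n - l) < e.
Definition hcauchy u :=
  forall e : R, 0 < e -> exists N, forall i j, (N <= i)%N -> (N <= j)%N -> nrm (u i - u j) < e.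

Lemma hcauchy_cvg u : hcauchy u -> exists l, hcvg u l.
Proof. exact: hcomplete. Qed.

Lemma hcvg_scaled u l (c : R) : hcvg u l -> 0 <= c ->
  forall e, 0 < e -> exists N, forall n, (N <= n)%N -> c * nrm (u n - l) <= e.
Proof.
move=> hu c0 e e0; have c1 : 0 < c + 1 by lra.
have [N hN] := hu _ (divr_gt0 e0 c1); exists N => n /hN h.
have : c * nrm (u n - l) <= c * (e / (c + 1)) by apply: ler_wpM2l => //; apply: ltW.
have : c * (e / (c + 1)) <= e by rewrite mulrA ler_pdivrMr //; nra.
lra.
Qed.

Lemma hcvg_unique u l1 l2 : hcvg u l1 -> hcvg u l2 -> l1 = l2.
Proof.
move=> h1 h2; apply/subr0_eq/hnorm_eq0/eqP; rewrite eq_le hnorm_ge0 andbT.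
apply/ler_addgt0Pr => e e0; rewrite add0r.
have [N1 hN1] := h1 _ (divr_gt0 e0 (ltr0Sn _ 1)); have [N2 hN2] := h2 _ (divr_gt0 e0 (ltr0Sn _ 1)).
have := hN1 _ (leq_maxl N1 N2); have := hN2 _ (leq_maxr N1 N2).
have := hnormB_le l1 (u (maxn N1 N2)) l2; rewrite (hnormB_sym l1 (u _)); lra.
Qed.

Lemma hcvg_norm_le u l (M : R) : hcvg u l -> (forall n, nrm (u n) <= M) -> nrm l <= M.
Proof.
move=> hu hM; apply/ler_addgt0Pr => e /hu [N /(_ N (leqnn N))].
have := hnormB_le l (u N) 0; rewrite !subr0 hnormB_sym; have := hM N; lra.
Qed.

Lemma hcvg_cst l : hcvg (fun=> l) l.
Proof. by move=> e e0; exists 0%N => n _; rewrite subrr hnorm0. Qed.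

Lemma eq_hcvg u v l : hcvg u l -> (forall n, u n = v n) -> hcvg v l.
Proof. by move=> hu uv e /hu [N hN]; exists N => n; rewrite -uv; apply: hN. Qed.

Lemma hcvgS u l : hcvg u l -> hcvg (fun n => u n.+1) l.
Proof. by move=> hu e /hu [N hN]; exists N => n /leqW; apply: hN. Qed.

Lemma hcvgD u v l m : hcvg u l -> hcvg v m -> hcvg (fun n => u n + v n) (l + m).
Proof.
move=> hu hv e e0.
have [N1 hN1] := hu _ (divr_gt0 e0 (ltr0Sn _ 1)); have [N2 hN2] := hv _ (divr_gt0 e0 (ltr0Sn _ 1)).
exists (maxn N1 N2) => n; rewrite geq_max => /andP [/hN1 h1 /hN2 h2].
rewrite opprD addrACA; apply: le_lt_trans (hnormD _ _) _; lra.
Qed.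

Lemma hcvg_bop (f : bop H) u l : hcvg u l -> hcvg (fun n => f (u n)) (f l).
Proof.
move=> hu e e0; have [M [M0 hM]] := bop_lipschitz f.
have [N hN] := hcvg_scaled hu M0 (divr_gt0 e0 (ltr0Sn _ 1)).
exists N => n /hN h; apply: le_lt_trans (hM _ _) _; lra.
Qed.

Lemma hcvg_Re_ip u v l m x y : hcvg u l -> hcvg v m ->
  (forall n, complex.Re (hinner (u n) y) = complex.Re (hinner x (v n))) ->
  complex.Re (hinner l y) = complex.Re (hinner x m).
Proof.
move=> hu hv huv; apply/eqP; rewrite -subr_eq0 -normr_le0.
apply/ler_addgt0Pr => e e0; rewrite add0r.
have [N1 hN1] := hcvg_scaled hu (hnorm_ge0 y) (divr_gt0 e0 (ltr0Sn _ 1)).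
have [N2 hN2] := hcvg_scaled hv (hnorm_ge0 x) (divr_gt0 e0 (ltr0Sn _ 1)).
pose n := maxn N1 N2.
have -> : complex.Re (hinner l y) - complex.Re (hinner x m)
    = - complex.Re (hinner (u n - l) y) - complex.Re (hinner x (m - v n)).
  by rewrite !(ipBl, ipBr, ReB) huv; ring.
apply: le_trans (ler_normB _ _) _; rewrite normrN.
have := norm_Re_ip_le (u n - l) y; have := norm_Re_ip_le x (m - v n).
have := hN1 n (leq_maxl _ _); have := hN2 n (leq_maxr _ _).
rewrite (hnormB_sym m); lra.
Qed.

Lemma hcvg_ip u v l m x y : hcvg u l -> hcvg v m ->
  (forall n, hinner (u n) y = hinner x (v n)) -> hinner l y = hinner x m.
Proof.
move=> hu hv huv; apply/subr0_eq/complex_eq0.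
  by rewrite ReB (hcvg_Re_ip (x := x) (y := y) hu hv) ?subrr // => n; rewrite huv.
have hiv := hcvg_bop (bop_scale 'i%C (bop_id H)) hv.
rewrite ImB -!Re_conji_mul -!ipZr (hcvg_Re_ip (x := x) (y := 'i%C *: y) hu hiv) ?subrr //.
by move=> n; rewrite ipZr huv ipZr.
Qed.

End Limits.

Lemma quadratic_ge0_eq0 (R : realFieldType) (a b : R) :
  0 <= b -> (forall t, 0 <= 2 * t * a + t ^+ 2 * b) -> a = 0.
Proof.
move=> b0 /(_ (- a / (b + 1))); have b1 : 0 < b + 1 by lra.
have -> : 2 * (- a / (b + 1)) * a + (- a / (b + 1)) ^+ 2 * b
    = - (a ^+ 2 * (b + 2)) / (b + 1) ^+ 2 by field; lra.
rewrite pmulr_lge0 ?invr_gt0 ?exprn_gt0 // oppr_ge0 pmulr_lle0; last lra.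
by move=> h; apply/eqP; rewrite -sqrf_eq0 eq_le h sqr_ge0.
Qed.

Section Riesz.
Variable R : realType.
Variable H : Hilbert R.
Implicit Types (x y z h : H).
Local Notation ip := (@hinner R H).
Local Notation nrm := (@hnorm R H).
Local Notation Re := (@complex.Re R).

Variable f : H -> R[i].
Hypothesis f_scalar : scalar f.
Variable M : R.
Hypothesis M_ge0 : 0 <= M.
Hypothesis Re_f_le : forall x, Re (f x) <= M * nrm x.

#[local] HB.instance Definition _ := GRing.isLinear.Build R[i] H R[i] *%R f f_scalar.

(* A maximiser of Re f on the unit ball exists because the parallelogram law
   makes maximising sequences Cauchy; it is orthogonal to ker f. *)
Let unit_ball_values t := exists x, nrm x <= 1 /\ t = Re (f x).
Let s := sup unit_ball_values.

Let unit_ball_values_ub : classical_sets.has_ubound unit_ball_values.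
Proof.
exists M => _ [x [hx ->]]; apply: le_trans (Re_f_le x) _.
by rewrite -{2}(mulr1 M) ler_wpM2l.
Qed.

Let Re_f_le_sup x : nrm x <= 1 -> Re (f x) <= s.
Proof. by move=> hx; apply: (ub_le_sup unit_ball_values_ub); exists x. Qed.

Let Re_f_le_sup_norm x : Re (f x) <= s * nrm x.
Proof.
have [/hnorm_eq0 ->|nx0] := eqVneq (nrm x) 0; first by rewrite linear0 hnorm0 mulr0.
have nx : 0 < nrm x by rewrite lt_def nx0 hnorm_ge0.
have := Re_f_le_sup (x := (nrm x)^-1%:C%C *: x).
rewrite linearZ ReCM hnormCZ ger0_norm ?invr_ge0 ?hnorm_ge0 // mulVf // lexx.
by rewrite ler_pdivrMl // mulrC => /(_ isT).
Qed.

Let exists_Re_f_gt0 : (exists w, f w != 0) -> exists z, 0 < Re (f z).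
Proof.
case=> w; have [lt|gt|eq] := ltrgtP (Re (f w)) 0.
- by exists (- w); rewrite linearN ReN oppr_gt0.
- by exists w.
have [lt|gt|/(complex_eq0 eq) ->] := ltrgtP (complex.Im (f w)) 0; last by rewrite eqxx.
- exists ('i%C *: w); rewrite linearZ /=.
  by move: lt; case: (f w) => a b /= ?; lra.
- exists (- ('i%C *: w)); rewrite linearN linearZ /=.
  by move: gt; case: (f w) => a b /= ?; lra.
Qed.

Let sup_gt0 : (exists w, f w != 0) -> 0 < s.
Proof.
case/exists_Re_f_gt0 => z fz; have z1 : 0 < nrm z + 1 by have := hnorm_ge0 z; lra.
apply: lt_le_trans (Re_f_le_sup (x := (nrm z + 1)^-1%:C%C *: z) _).
  by rewrite linearZ ReCM mulr_gt0 ?invr_gt0.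
rewrite hnormCZ ger0_norm ?invr_ge0 ?(ltW z1) // ler_pdivrMl // mulr1; lra.
Qed.

Let near_sup_close x y d : 0 < s -> nrm x <= 1 -> nrm y <= 1 ->
  s - d < Re (f x) -> s - d < Re (f y) -> s * nrm (x - y) ^+ 2 <= 8 * d.
Proof.
move=> s0 x1 y1 fx fy; have := parallelogram x y.
have := hnorm_ge0 x; have := hnorm_ge0 y; have := hnorm_ge0 (x + y).
set p := nrm (x + y); set q := nrm (x - y) => p0 ny nx par.
have fxy : Re (f x) + Re (f y) <= s * p.
  by have := Re_f_le_sup_norm (x + y); rewrite linearD /= ReD.
have sp : 2 * s - 2 * d <= s * p by lra.
have nx2 : nrm x ^+ 2 <= 1 by rewrite expr_le1.
have ny2 : nrm y ^+ 2 <= 1 by rewrite expr_le1.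
have q2 : q ^+ 2 <= 4 - p ^+ 2 by lra.
have sq2 : s * q ^+ 2 <= s * (4 - p ^+ 2) by rewrite ler_pM2l.
suff : 4 * s - 8 * d <= s * p ^+ 2 by lra.
have [dle|dgt] := lerP s d; first by nra.
rewrite -(ler_pM2l s0).
have : (2 * s - 2 * d) ^+ 2 <= (s * p) ^+ 2 by rewrite ler_pXn2r ?nnegrE //; nra.
nra.
Qed.

Let exists_norming : 0 < s -> exists x0, nrm x0 <= 1 /\ s <= Re (f x0).
Proof.
move=> s0; have near n : exists x, nrm x <= 1 /\ s - n.+1%:R^-1 < Re (f x).
  have : s - n.+1%:R^-1 < s by rewrite ltrBlDr ltrDl invr_gt0 ltr0Sn.
  have ne : classical_sets.nonempty unit_ball_values.
    by exists 0, 0; rewrite hnorm0 linear0.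
  by case/(sup_gt ne) => _ [x [x1 ->]] fx; exists x.
have [xs hxs] := boolp.choice near.
have cauchy : hcauchy xs.
  move=> e e0; have d0 : 0 < e ^+ 2 * s / 16 by rewrite divr_gt0 ?mulr_gt0 ?exprn_gt0.
  have [N hN] := invSn_lt d0; exists N => i j /hN hi /hN hj.
  have [xi1 fxi] := hxs i; have [xj1 fxj] := hxs j.
  have fi : s - e ^+ 2 * s / 16 < Re (f (xs i)).
    by apply: le_lt_trans fxi; rewrite lerD2l lerN2 ltW.
  have fj : s - e ^+ 2 * s / 16 < Re (f (xs j)).
    by apply: le_lt_trans fxj; rewrite lerD2l lerN2 ltW.
  have := near_sup_close s0 xi1 xj1 fi fj.
  rewrite -(ltr_pXn2r (n := 2)) ?nnegrE ?hnorm_ge0 ?(ltW e0) // -(ltr_pM2l s0).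
  lra.
have [x0 hx0] := hcauchy_cvg cauchy; exists x0; split.
  by apply: hcvg_norm_le hx0 _ => n; case: (hxs n).
apply/ler_addgt0Pr => e e0.
have [N1 hN1] := hcvg_scaled hx0 M_ge0 (divr_gt0 e0 (ltr0Sn _ 1)).
have [N2 hN2] := invSn_lt (divr_gt0 e0 (ltr0Sn _ 1)).
pose n := maxn N1 N2; have := hN1 n (leq_maxl _ _); have := hN2 n (leq_maxr _ _).
have [_] := hxs n; set a := n.+1%:R^-1.
have := Re_f_le (xs n - x0); rewrite linearB /= ReB; lra.
Qed.

Let norming_orthogonal x0 h : 0 < s -> nrm x0 <= 1 -> s <= Re (f x0) ->
  f h = 0 -> ip h x0 = 0.
Proof.
move=> s0 x01 fx0; suff Re0 h' : f h' = 0 -> Re (ip x0 h') = 0.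
  move=> fh; rewrite hinnerC (complex_eq0 (Re0 h fh)) ?rmorph0 //.
  by have := Re0 ('i%C *: h); rewrite ipZr Re_conji_mul linearZ /= fh mulr0 => ->.
move=> fh'; apply: (quadratic_ge0_eq0 (sqr_ge0 (nrm h'))) => t.
set z := x0 + t%:C%C *: h'.
have fz : Re (f x0) <= s * nrm z.
  by have := Re_f_le_sup_norm z; rewrite linearD linearZ /= fh' mulr0 addr0.
have z1 : 1 <= nrm z by rewrite -(ler_pM2l s0) mulr1; lra.
have : 1 <= nrm z ^+ 2 by rewrite expr_ge1 // (le_trans ler01).
have : nrm x0 ^+ 2 <= 1 by rewrite expr_le1 ?hnorm_ge0.
rewrite /z hnorm_sqrD; lra.
Qed.

Lemma riesz_representation : exists y, forall x, f x = ip x y.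
Proof.
have [nz|f0] := boolp.EM (exists w, f w != 0); last first.
  exists 0 => x; rewrite ip0r; apply: boolp.contrapT => fx.
  by apply: f0; exists x; apply/eqP.
have s0 := sup_gt0 nz; have [x0 [x01 fx0]] := exists_norming s0.
have fx0_neq0 : f x0 != 0 by apply: Re_neq0; rewrite gt_eqF // (lt_le_trans s0).
have x0_neq0 : ip x0 x0 != 0 by apply: contra fx0_neq0 => /eqP/hinner_eq0 ->; rewrite linear0.
exists ((f x0 / ip x0 x0)^* *: x0) => x; rewrite ipZr conjCK.
have := norming_orthogonal (h := x - (f x / f x0) *: x0) s0 x01 fx0.
rewrite linearB linearZ /= mulfVK // subrr ipBl ipZl => /(_ erefl) /eqP.
by rewrite subr_eq0 => /eqP ->; field; rewrite fx0_neq0 x0_neq0.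
Qed.

End Riesz.

Lemma adjoint_exists (R : realType) (H : Hilbert R) (T : bop H) :
  exists Ts : bop H, forall x y, hinner (T x) y = hinner x (Ts y).
Proof.
have [M [M0 hM]] := bop_bounded T.
have represent y : exists z, forall x, hinner (T x) y = hinner x z.
  apply: (@riesz_representation R H (fun x => hinner (T x) y) _ (M * hnorm y)).
  - by move=> a x x'; rewrite bopP ipDl ipZl.
  - by rewrite mulr_ge0 ?hnorm_ge0.
  - move=> x; apply: le_trans (Re_ip_le _ _) _.
    by rewrite mulrAC ler_wpM2r ?hnorm_ge0.
have [Ts hTs] := boolp.choice represent.
have Ts_linear : linear Ts.
  by move=> a y y'; apply: ip_eqr => x; rewrite -hTs !ipDr !ipZr -!hTs.
have Ts_bounded : hbounded Ts.
  by exists M; split=> //; apply: adjoint_bounded M0 hM _ => x y; rewrite hTs.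
by exists (BOp Ts_linear Ts_bounded).
Qed.

Section SqrtOneSub.
Variable R : realType.
Variable H : Hilbert R.
Implicit Types (x y : H).
Local Notation ip := (@hinner R H).
Local Notation nrm := (@hnorm R H).

Variable B : bop H.
Hypothesis B_contraction : forall x, nrm (B x) <= nrm x.
Hypothesis B_selfadjoint : forall x y, ip (B x) y = ip x (B y).

Local Notation half := ((2 : R)^-1%:C%C).

(* [sqrt_iter n] increases to 1 - sqrt (1 - B); the scalar recursion
   [sqrt_majorant] bounds both the norms of the iterates and their increments. *)
Fixpoint sqrt_iter n : bop H :=
  if n is k.+1 then bop_scale half (bop_add B (bop_comp (sqrt_iter k) (sqrt_iter k)))
  else bop_zero H.
Fixpoint sqrt_majorant n : R :=
  if n is k.+1 then (1 + sqrt_majorant k ^+ 2) / 2 else 0.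

Local Notation W := sqrt_iter.
Local Notation w := sqrt_majorant.

Lemma sqrt_iterS n x : W n.+1 x = half *: (B x + W n (W n x)).
Proof. by []. Qed.

Lemma sqrt_majorant_bounds n : 0 <= w n <= 1.
Proof.
elim: n => [|n /andP [w0 w1]] /=; first by rewrite lexx ler01.
by apply/andP; split; nra.
Qed.

Lemma sqrt_majorant_le1 n : w n <= 1.
Proof. by case/andP: (sqrt_majorant_bounds n). Qed.

Lemma sqrt_majorant_nondecreasing n : w n <= w n.+1.
Proof. by have /andP [w0 w1] := sqrt_majorant_bounds n; rewrite /=; nra. Qed.

Lemma hnorm_half x : nrm (half *: x) = 2^-1 * nrm x.
Proof. by rewrite hnormCZ ger0_norm // invr_ge0. Qed.

Lemma sqrt_iter_le n x : nrm (W n x) <= w n * nrm x.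
Proof.
elim: n x => [|n ih] x; first by rewrite hnorm0 mul0r.
rewrite sqrt_iterS hnorm_half /=.
have /andP [w0 w1] := sqrt_majorant_bounds n.
have : w n * nrm (W n x) <= w n * (w n * nrm x) by apply: ler_wpM2l => //; apply: ih.
have := hnormD (B x) (W n (W n x)); have := ih (W n x); have := B_contraction x.
have -> : (1 + w n ^+ 2) / 2 * nrm x = 2^-1 * (nrm x + w n * (w n * nrm x)) by ring.
by move=> *; apply: ler_wpM2l; rewrite ?invr_ge0 //; lra.
Qed.

Lemma sqrt_iter_step n x : nrm (W n.+1 x - W n x) <= (w n.+1 - w n) * nrm x.
Proof.
elim: n x => [|n ih] x.
  have -> : w 1 - w 0 = 2^-1 by rewrite /=; ring.
  rewrite subr0 sqrt_iterS /= addr0 hnorm_half.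
  by apply: ler_wpM2l; rewrite ?invr_ge0.

have -> : W n.+2 x - W n.+1 x =
    half *: (W n.+1 (W n.+1 x - W n x) + (W n.+1 (W n x) - W n (W n x))).
  rewrite (sqrt_iterS n.+1 x) (sqrt_iterS n x) bopB -scalerBr; congr (_ *: _).
  by rewrite opprD addrACA subrr add0r addrA subrK.
rewrite hnorm_half.
have /andP [w0 w1] := sqrt_majorant_bounds n.
have /andP [w0' w1'] := sqrt_majorant_bounds n.+1.
have dw := sqrt_majorant_nondecreasing n; have nx := hnorm_ge0 x.
have i1 := sqrt_iter_le n.+1 (W n.+1 x - W n x).
have i2 := ih x; have i3 := ih (W n x); have i4 := sqrt_iter_le n x.
have := hnormD (W n.+1 (W n.+1 x - W n x)) (W n.+1 (W n x) - W n (W n x)).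
have j1 : w n.+1 * nrm (W n.+1 x - W n x) <= w n.+1 * ((w n.+1 - w n) * nrm x).
  by apply: ler_wpM2l.
have j2 : (w n.+1 - w n) * nrm (W n x) <= (w n.+1 - w n) * (w n * nrm x).
  by apply: ler_wpM2l; rewrite ?subr_ge0.
have -> : w n.+2 - w n.+1 = 2^-1 * (w n.+1 * (w n.+1 - w n) + (w n.+1 - w n) * w n).
  by rewrite /=; ring.
by move=> ?; rewrite -mulrA; apply: ler_wpM2l; rewrite ?invr_ge0 //; nra.
Qed.

Lemma sqrt_iter_diff n m x : (n <= m)%N -> nrm (W m x - W n x) <= (w m - w n) * nrm x.
Proof.
move/subnK <-; elim: (m - n)%N => [|k ih]; first by rewrite add0n !subrr hnorm0 mul0r.
have := hnormB_le (W (k + n).+1 x) (W (k + n) x) (W n x).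
by have := sqrt_iter_step (k + n) x; rewrite addSn; lra.
Qed.

Lemma sqrt_iter_selfadjoint n x y : ip (W n x) y = ip x (W n y).
Proof.
elim: n x y => [|n ih] x y; first by rewrite ip0l ip0r.
by rewrite !sqrt_iterS ipZl ipCZr ipDl ipDr B_selfadjoint !ih.
Qed.

Lemma sqrt_iter_comm (C : bop H) : (forall x, C (B x) = B (C x)) ->
  forall n x, C (W n x) = W n (C x).
Proof.
move=> CB; elim=> [|n ih] x; first by rewrite /= bop0.
by rewrite !sqrt_iterS bopZ bopD CB !ih.
Qed.

Lemma sqrt_iter_cauchy x : hcauchy (fun n => W n x).
Proof.
move=> e e0; have nx := hnorm_ge0 x; have e1 : 0 < e / (nrm x + 1) by rewrite divr_gt0 //; lra.
have [N hN] := nondecreasing_bounded_cauchy sqrt_majorant_nondecreasing sqrt_majorant_le1 e1.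
suff close m n : (N <= n)%N -> (n <= m)%N -> nrm (W m x - W n x) < e.
  exists N => i j hi hj; have [ij|/ltnW ji] := leqP j i; first exact: close.
  by rewrite hnormB_sym; apply: close.
move=> Nn nm; apply: le_lt_trans (sqrt_iter_diff x nm) _.
have dw : 0 <= w m - w n.
  by rewrite subr_ge0 (nondecreasing_le sqrt_majorant_nondecreasing).
have := hN m n Nn nm; rewrite ltr_pdivlMr; last lra.
by apply: le_lt_trans; apply: ler_wpM2l => //; lra.
Qed.

Lemma sqrt_iter_cvg : exists L : bop H, forall x, hcvg (fun n => W n x) (L x).
Proof.
have [L hL] := boolp.choice (fun x => hcauchy_cvg (sqrt_iter_cauchy x)).
have L_linear : linear L.
  move=> a x y; apply: (hcvg_unique (hL (a *: x + y))).
  apply: eq_hcvg (hcvgD (hcvg_bop (bop_scale a (bop_id H)) (hL x)) (hL y)) _ => n.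
  by rewrite /= bopP.
have L_bounded : hbounded L.
  exists 1; split=> // x; rewrite mul1r; apply: hcvg_norm_le (hL x) _ => n.
  apply: le_trans (sqrt_iter_le n x) _.
  by rewrite ler_piMl ?hnorm_ge0 ?sqrt_majorant_le1.
by exists (BOp L_linear L_bounded).
Qed.

Lemma sqrt_iter_cvg_sqr (L : bop H) : (forall x, hcvg (fun n => W n x) (L x)) ->
  forall x, hcvg (fun n => W n (W n x)) (L (L x)).
Proof.
move=> hL x e e0.
have [N1 hN1] := hL x _ (divr_gt0 e0 (ltr0Sn _ 1)).
have [N2 hN2] := hL (L x) _ (divr_gt0 e0 (ltr0Sn _ 1)).
exists (maxn N1 N2) => n; rewrite geq_max => /andP [/hN1 h1 /hN2 h2].
have := sqrt_iter_le n (W n x - L x); rewrite bopB.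
have := hnormB_le (W n (W n x)) (W n (L x)) (L (L x)).
have := hnorm_ge0 (W n x - L x).
have /andP [w0 w1] := sqrt_majorant_bounds n; nra.
Qed.

Lemma sqrt_iter_lim_fix (L : bop H) : (forall x, hcvg (fun n => W n x) (L x)) ->
  forall x, L (L x) = 2%:R *: L x - B x.
Proof.
move=> hL x.
have lim : hcvg (fun n => W n.+1 x) (half *: (B x + L (L x))).
  apply: (hcvg_bop (bop_scale half (bop_id H)) (u := fun n => B x + W n (W n x))).
  exact: hcvgD (hcvg_cst _) (sqrt_iter_cvg_sqr hL x).
have e : L x = half *: (B x + L (L x)) := hcvg_unique (hcvgS (hL x)) lim.
rewrite {2}e scalerA.
suff -> : (2%:R : R[i]) * half = 1 by rewrite scale1r addrC addKr.
by apply/eqP; rewrite eq_complex /=; apply/andP; split; apply/eqP; field.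
Qed.

Lemma sqrt_one_sub_exists : exists Q : bop H,
  [/\ forall x, Q (Q x) = x - B x,
      forall x y, ip (Q x) y = ip x (Q y) &
      forall C : bop H, (forall x, C (B x) = B (C x)) -> forall x, C (Q x) = Q (C x)].
Proof.
have [L hL] := sqrt_iter_cvg.
have [Q QE] : exists Q : bop H, forall x, Q x = x - L x.
  by exists (bop_add (bop_id H) (bop_scale (-1) L)) => x; rewrite /= scaleN1r.
exists Q; split.
- move=> x; rewrite !QE bopB (sqrt_iter_lim_fix hL).
  by apply: ip_eql => z; rewrite !(ipBl, ipZl); ring.
- move=> x y; rewrite !QE ipBl ipBr (hcvg_ip (x := x) (y := y) (hL x) (hL y)) //.
  by move=> n; apply: sqrt_iter_selfadjoint.
- move=> C CB x; rewrite !QE bopB; congr (_ - _).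
  apply: (hcvg_unique (hcvg_bop C (hL x))).
  by apply: eq_hcvg (hL (C x)) _ => n; rewrite sqrt_iter_comm.
Qed.

End SqrtOneSub.

Lemma le_sqrt_sqrD (R : rcfType) (a b : R) : 0 <= a -> a <= Num.sqrt (a ^+ 2 + b ^+ 2).
Proof.
move=> a0; rewrite -{1}(ger0_norm a0) -sqrtr_sqr ler_sqrt ?addr_ge0 ?sqr_ge0 //.
by rewrite lerDl sqr_ge0.
Qed.

Lemma sqrt_sqrD_le (R : rcfType) (a b : R) :
  0 <= a -> 0 <= b -> Num.sqrt (a ^+ 2 + b ^+ 2) <= a + b.
Proof.
move=> a0 b0; rewrite -(ger0_norm (addr_ge0 a0 b0)) -sqrtr_sqr ler_sqrt ?sqr_ge0 //.
nra.
Qed.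

Section DirectSum.
Variable R : realType.
Variable H : Hilbert R.
Implicit Types (u v w : (H * H)%type).
Local Notation ip := (@hinner R H).
Local Notation nrm := (@hnorm R H).

Definition dsum_ip u v : R[i] := ip u.1 v.1 + ip u.2 v.2.

Lemma dsum_ipDl (a : R[i]) u v w : dsum_ip (a *: u + v) w = a * dsum_ip u w + dsum_ip v w.
Proof. by rewrite /dsum_ip /= !hinnerDl; ring. Qed.
Lemma dsum_ipC u v : dsum_ip v u = (dsum_ip u v)^*.
Proof. by rewrite /dsum_ip rmorphD /= -!hinnerC. Qed.
Lemma dsum_ip_ge0 u : 0 <= dsum_ip u u.
Proof. by rewrite /dsum_ip addr_ge0 ?hinner_ge0. Qed.
Lemma dsum_ip_eq0 u : dsum_ip u u = 0 -> u = 0.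
Proof.
case: u => a b; rewrite /dsum_ip /= => /eqP; rewrite paddr_eq0 ?hinner_ge0 //.
by case/andP => /eqP /hinner_eq0 -> /eqP /hinner_eq0 ->.
Qed.

Lemma Re_dsum_ip u : complex.Re (dsum_ip u u) = nrm u.1 ^+ 2 + nrm u.2 ^+ 2.
Proof. by rewrite /dsum_ip ReD !hnorm_sqr. Qed.

Lemma dsum_complete (s : nat -> (H * H)%type) :
  (forall e : R, 0 < e -> exists N : nat, forall m n : nat, (N <= m)%N -> (N <= n)%N ->
     Num.sqrt (complex.Re (dsum_ip (s m - s n) (s m - s n))) < e) ->
  exists l, forall e : R, 0 < e -> exists N : nat, forall n : nat, (N <= n)%N ->
     Num.sqrt (complex.Re (dsum_ip (s n - l) (s n - l))) < e.
Proof.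
move=> hs.
have c1 : hcauchy (fun n => (s n).1).
  move=> e /hs [N hN]; exists N => i j hi hj /=; apply: le_lt_trans (hN i j hi hj).
  by rewrite Re_dsum_ip -[(s i).1 - _]/((s i - s j).1) le_sqrt_sqrD ?hnorm_ge0.
have c2 : hcauchy (fun n => (s n).2).
  move=> e /hs [N hN]; exists N => i j hi hj /=; apply: le_lt_trans (hN i j hi hj).
  by rewrite Re_dsum_ip [_ ^+ 2 + _]addrC -[(s i).2 - _]/((s i - s j).2) le_sqrt_sqrD ?hnorm_ge0.
have [l1 h1] := hcauchy_cvg c1; have [l2 h2] := hcauchy_cvg c2.
exists (l1, l2) => e e0.
have [N1 hN1] := h1 _ (divr_gt0 e0 (ltr0Sn _ 1)).
have [N2 hN2] := h2 _ (divr_gt0 e0 (ltr0Sn _ 1)).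
exists (maxn N1 N2) => n; rewrite geq_max => /andP [/hN1 a1 /hN2 a2].
rewrite Re_dsum_ip; apply: le_lt_trans (sqrt_sqrD_le (hnorm_ge0 _) (hnorm_ge0 _)) _.
by rewrite /=; lra.
Qed.

Definition dsum : Hilbert R :=
  @Hilbert_ R ((H * H)%type : lmodType R[i]) dsum_ip dsum_ipDl dsum_ipC
    dsum_ip_ge0 dsum_ip_eq0 dsum_complete.

Lemma dsum_hinnerE (u v : dsum) : hinner u v = ip u.1 v.1 + ip u.2 v.2.
Proof. by []. Qed.
Lemma dsum_hnormE (u : dsum) : hnorm u = Num.sqrt (nrm u.1 ^+ 2 + nrm u.2 ^+ 2).
Proof. by rewrite /hnorm -Re_dsum_ip. Qed.
Lemma hnorm_fst_le (u : dsum) : nrm u.1 <= hnorm u.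
Proof. by rewrite dsum_hnormE le_sqrt_sqrD ?hnorm_ge0. Qed.
Lemma hnorm_snd_le (u : dsum) : nrm u.2 <= hnorm u.
Proof. by rewrite dsum_hnormE addrC le_sqrt_sqrD ?hnorm_ge0. Qed.

Section Block.
Variables A B C D : bop H.

Definition block (u : dsum) : dsum := (A u.1 + B u.2, C u.1 + D u.2).

Lemma block_linear : linear block.
Proof. by move=> a u v; rewrite /block /=; congr (_, _); rewrite !bopP addrACA -scalerDr. Qed.

Lemma block_bounded : hbounded block.
Proof.
have [Ma [Ma0 hA]] := bop_bounded A; have [Mb [Mb0 hB]] := bop_bounded B.
have [Mc [Mc0 hC]] := bop_bounded C; have [Md [Md0 hD]] := bop_bounded D.
exists (Ma + Mb + Mc + Md); split=> [|u]; first by rewrite !addr_ge0.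
rewrite dsum_hnormE; apply: le_trans (sqrt_sqrD_le (hnorm_ge0 _) (hnorm_ge0 _)) _.
have := hnormD (A u.1) (B u.2); have := hnormD (C u.1) (D u.2).
have := hA u.1; have := hB u.2; have := hC u.1; have := hD u.2.
have := hnorm_fst_le u; have := hnorm_snd_le u; rewrite /=; nra.
Qed.

Definition block_bop := BOp block_linear block_bounded.

End Block.

End DirectSum.

Section Defect.
Variable R : realType.
Variable H : Hilbert R.
Implicit Types (x y : H).
Local Notation ip := (@hinner R H).
Local Notation nrm := (@hnorm R H).
Local Notation Re := (@complex.Re R).

Variables (a b : R) (S : bop H).
Hypothesis a_lt_b : a < b.
Hypothesis S_selfadjoint : forall x y, ip (S x) y = ip x (S y).
Hypothesis S_bounds : forall x, a * nrm x ^+ 2 <= Re (ip (S x) x) <= b * nrm x ^+ 2.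

Lemma defect_exists : exists D : bop H,
  [/\ forall x y, ip (D x) y = ip x (D y),
      forall x, D (S x) = S (D x) &
      forall x, D (D x) = b%:C%C *: S x - S (S x) - (a * b)%:C%C *: x + a%:C%C *: S x].
Proof.
(* N = (S - c) / d is a self-adjoint contraction, and D = d sqrt (1 - N^2)
   satisfies D^2 = d^2 - (S - c)^2 = (b - S)(S - a). *)
pose c := (a + b) / 2; pose d := (b - a) / 2.
have d0 : 0 < d by rewrite /d divr_gt0 // subr_gt0.
have [N NE] : exists N : bop H, forall x, N x = d^-1%:C%C *: (S x - c%:C%C *: x).
  exists (bop_scale d^-1%:C%C (bop_add S (bop_scale (- c)%:C%C (bop_id H)))) => x /=.
  by rewrite rmorphN scaleNr.
have N_selfadjoint x y : ip (N x) y = ip x (N y).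
  by rewrite !NE ipZl ipCZr ipBl ipBr ipZl ipCZr S_selfadjoint.
have N_contraction : forall x, nrm (N x) <= nrm x.
  apply: (selfadjoint_contraction N_selfadjoint) => z.
  rewrite NE ipZl ReCM ipBl ipZl ReB ReCM -hnorm_sqr.
  have /andP [lo hi] := S_bounds z; have := sqr_ge0 (nrm z).
  rewrite normrM ger0_norm ?invr_ge0 ?(ltW d0) // ler_pdivrMl // ler_norml.
  by move=> ?; apply/andP; split; rewrite /c /d; lra.
have NS x : N (S x) = S (N x) by rewrite !NE !(bopZ, bopB).
have [Q [QQ Q_selfadjoint Q_comm]] := sqrt_one_sub_exists
  (B := bop_comp N N) (fun x => le_trans (N_contraction _) (N_contraction _))
  (fun x y => etrans (N_selfadjoint _ _) (N_selfadjoint _ _)).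
exists (bop_scale d%:C%C Q); split => /=.
- by move=> x y; rewrite ipZl ipCZr Q_selfadjoint.
- by move=> x; rewrite bopZ (Q_comm S) // => y; rewrite /= !NS.
- move=> x; rewrite bopZ QQ /= !NE !(bopZ, bopB).
  apply: ip_eql => z; rewrite !(ipBl, ipDl, ipNl, ipZl) /c /d.
  by field; apply: Re_neq0 => /=; rewrite subr_eq0 gt_eqF.
Qed.

End Defect.

Section Dilation.
Variable R : realType.
Variable H : Hilbert R.
Implicit Types (x y z : H) (u v : dsum H).
Local Notation ip := (@hinner R H).

Variable r : R.
Hypotheses (r_gt0 : 0 < r) (r_lt1 : r < 1).
Variables T Ti Ta Tia D : bop H.
Hypotheses (T_Ti : forall x, T (Ti x) = x) (Ti_T : forall x, Ti (T x) = x).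
Hypothesis T_adj : forall x y, ip (T x) y = ip x (Ta y).
Hypothesis Ti_adj : forall x y, ip (Ti x) y = ip x (Tia y).
Hypothesis D_selfadjoint : forall x y, ip (D x) y = ip x (D y).
Hypothesis D_comm : forall x, D (Ta (T x)) = Ta (T (D x)).
Hypothesis D_sqr : forall x,
  D (D x) = Ta (T x) - Ta (T (Ta (T x))) - (r ^+ 2)%:C%C *: (x - Ta (T x)).

Let Ta_Tia x : Ta (Tia x) = x.
Proof. by apply: ip_eqr => z; rewrite -T_adj -Ti_adj Ti_T. Qed.
Let Tia_Ta x : Tia (Ta x) = x.
Proof. by apply: ip_eqr => z; rewrite -Ti_adj -T_adj T_Ti. Qed.
Let Tia_adj x y : ip (Tia x) y = ip x (Ti y).
Proof. by rewrite hinnerC -Ti_adj -hinnerC. Qed.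
Let TaT_selfadjoint x y : ip (Ta (T x)) y = ip x (Ta (T y)).
Proof. by rewrite -T_adj hinnerC -T_adj -hinnerC. Qed.

Let k := (1 - r ^+ 2)^-1.

(* With S = T^* T, J^* J = [[S, D], [D, 1 + r^2 - S]] splits as P0 + r^2 P1 with
   P0 = k [[S - r^2, D], [D, 1 - S]] and P1 = k [[1 - S, -D], [-D, S - r^2]]. *)
Definition dilation := block_bop T (bop_comp Tia D) (bop_zero H) (bop_scale r%:C%C Tia).
Definition dilation_inv := block_bop Ti
  (bop_scale (- r^-1)%:C%C (bop_comp Ti (bop_comp Tia (bop_comp D Ta))))
  (bop_zero H) (bop_scale r^-1%:C%C Ta).
Definition dilation_adj := block_bop Ta (bop_zero H) (bop_comp D Ti) (bop_scale r%:C%C Ti).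

Let S := bop_comp Ta T.
Let Sa := bop_scale k%:C%C (bop_add S (bop_scale (- r ^+ 2)%:C%C (bop_id H))).
Let Sb := bop_scale k%:C%C (bop_add (bop_id H) (bop_scale (-1) S)).
Definition dilation_P0 := block_bop Sa (bop_scale k%:C%C D) (bop_scale k%:C%C D) Sb.
Definition dilation_P1 :=
  block_bop Sb (bop_scale (- k)%:C%C D) (bop_scale (- k)%:C%C D) Sa.

Ltac bop_simpl := rewrite ?(bopD, bopZ, bopN, bopB, bop0, addr0, add0r, scaler0).
(* Vector identities are checked by pairing with an arbitrary z, which turns
   them into field identities in R[i]. *)
Ltac ip_expand := apply: ip_eql => z; rewrite ?(ipDl, ipZl, ipNl, ipBl, ip0l).
Ltac nonzero := repeat (apply/andP; split); apply: Re_neq0 => /=; apply/eqP;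
  have := r_gt0; have := r_lt1; nra.

Lemma dilation_invK u : dilation (dilation_inv u) = u.
Proof.
case: u => u1 u2; rewrite /= /block /=; congr (_, _); bop_simpl;
  rewrite ?T_Ti ?Tia_Ta; ip_expand; field; nonzero.
Qed.

Lemma dilationK u : dilation_inv (dilation u) = u.
Proof.
case: u => u1 u2; rewrite /= /block /=; congr (_, _); bop_simpl;
  rewrite ?Ti_T ?Ta_Tia; ip_expand; field; nonzero.
Qed.

Lemma dilation_adjP u v : hinner (dilation u) v = hinner u (dilation_adj v).
Proof.
case: u => u1 u2; case: v => v1 v2; rewrite !dsum_hinnerE /= /block /=; bop_simpl.
rewrite !(ipDl, ipZl, ipDr, ipZr, ip0l, ip0r) !conjC_real T_adj Tia_adj D_selfadjoint Tia_adj.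
ring.
Qed.

Let D_Ti_Tia y : D (Ti (Tia (D y))) + (r ^+ 2)%:C%C *: Ti (Tia y) = y + (r ^+ 2)%:C%C *: y - Ta (T y).
Proof.
have -> : y = Ta (T (Ti (Tia y))) by rewrite T_Ti Ta_Tia.
by rewrite D_comm Tia_Ta Ti_T D_sqr Tia_Ta Ti_T; ip_expand; ring.
Qed.

Lemma dilation_adjK u : dilation_adj (dilation u) = dilation_P0 u + (r ^+ 2)%:C%C *: dilation_P1 u.
Proof.
case: u => u1 u2; rewrite /= /block /=; congr (_, _); bop_simpl.
  by rewrite ?Ta_Tia; ip_expand; rewrite /k; field; nonzero.
rewrite Ti_T scalerA -rmorphM -expr2 -addrA D_Ti_Tia.
by ip_expand; rewrite /k; field; nonzero.
Qed.

Lemma dilation_P0_idem u : dilation_P0 (dilation_P0 u) = dilation_P0 u.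
Proof.
case: u => u1 u2; rewrite /= /block /=; congr (_, _); bop_simpl;
  rewrite ?D_comm; bop_simpl; rewrite ?D_sqr; bop_simpl; ip_expand; rewrite /k; field; nonzero.
Qed.

Lemma dilation_P1_idem u : dilation_P1 (dilation_P1 u) = dilation_P1 u.
Proof.
case: u => u1 u2; rewrite /= /block /=; congr (_, _); bop_simpl;
  rewrite ?D_comm; bop_simpl; rewrite ?D_sqr; bop_simpl; ip_expand; rewrite /k; field; nonzero.
Qed.

Lemma dilation_P0_selfadjoint u v : hinner (dilation_P0 u) v = hinner u (dilation_P0 v).
Proof.
case: u => u1 u2; case: v => v1 v2; rewrite !dsum_hinnerE /= /block /=.
rewrite !(ipDl, ipZl, ipDr, ipZr, ip0l, ip0r) !conjC_real !TaT_selfadjoint !D_selfadjoint.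
ring.
Qed.

Lemma dilation_P1_selfadjoint u v : hinner (dilation_P1 u) v = hinner u (dilation_P1 v).
Proof.
case: u => u1 u2; case: v => v1 v2; rewrite !dsum_hinnerE /= /block /=.
rewrite !(ipDl, ipZl, ipDr, ipZr, ip0l, ip0r) !conjC_real !TaT_selfadjoint !D_selfadjoint.
ring.
Qed.

Lemma dilation_P0_P1 u : dilation_P0 u + dilation_P1 u = u.
Proof.
case: u => u1 u2; rewrite /= /block /=; congr (_, _); bop_simpl;
  ip_expand; rewrite /k; field; nonzero.
Qed.

Lemma dilation_embed x : dilation (x, 0) = (T x, 0).
Proof. by rewrite /= /block /=; bop_simpl. Qed.

Lemma dilation_inv_embed x : dilation_inv (x, 0) = (Ti x, 0).
Proof. by rewrite /= /block /=; bop_simpl. Qed.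

Lemma dilation_is_inverse : is_inverse dilation dilation_inv.
Proof. exact: bop_is_inverse dilationK dilation_invK. Qed.

Lemma dilation_calC1r : calC1r r dilation.
Proof.
split; first exact: bop_bounded_op.
exists dilation_adj, dilation_P0, dilation_P1; split; first exact: bop_is_adjoint dilation_adjP.
split; first exact: bop_orth_proj dilation_P0_idem dilation_P0_selfadjoint.
split; first exact: bop_orth_proj dilation_P1_idem dilation_P1_selfadjoint.
by split; [exact: dilation_P0_P1 | exact: dilation_adjK].
Qed.

End Dilation.

Section Embedding.
Variable R : realType.
Variable H : Hilbert R.

Definition embed (x : H) : dsum H := (x, 0).

Lemma embed_hisometry : hisometry embed.
Proof.
have iso x : hnorm (embed x) = hnorm x.
  by rewrite dsum_hnormE /= hnorm0 expr0n addr0 sqrtr_sqr ger0_norm ?hnorm_ge0.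
split=> //; apply/bounded_opP; split; last by exists 1; split=> // x; rewrite iso mul1r.
by move=> a x y; rewrite /embed; congr (_, _) => /=; rewrite scaler0 addr0.
Qed.

Lemma embed_adjoint : is_adjoint embed (fun u : dsum H => u.1).
Proof.
split; first by case: embed_hisometry.
split; last by move=> x u; rewrite /inner dsum_hinnerE /= ip0l addr0.
apply/bounded_opP; split=> [a u v //|].
by exists 1; split=> // u; rewrite mul1r hnorm_fst_le.
Qed.

Lemma iter_embed (J : dsum H -> dsum H) (F : H -> H) :
  (forall x, J (embed x) = embed (F x)) -> forall k x, iter k J (embed x) = embed (iter k F x).
Proof. by move=> JF; elim=> [|k ih] x //=; rewrite ih JF. Qed.

Lemma embed_zpow (T Ti : H -> H) (J Ji : dsum H -> dsum H) :
  (forall x, J (embed x) = embed (T x)) -> (forall x, Ji (embed x) = embed (Ti x)) ->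
  forall n x, zpow T Ti n x = (zpow J Ji n (embed x)).1.
Proof.
move=> JT JiTi [k|k] x /=; first by rewrite (iter_embed JT).
by rewrite (iter_embed JiTi) JiTi.
Qed.

End Embedding.

Lemma is_inverse_unique (R : realType) (H : Hilbert R) (T S S' : H -> H) :
  is_inverse T S -> is_inverse T S' -> forall x, S' x = S x.
Proof. by move=> [_ [_ [_ TS]]] [_ [_ [S'T _]]] x; rewrite -{1}(TS x) S'T. Qed.

Section Forward.
Variable R : realType.
Variable H : Hilbert R.
Implicit Types (x y : H).
Local Notation ip := (@hinner R H).
Local Notation nrm := (@hnorm R H).

Variable r : R.
Hypotheses (r_gt0 : 0 < r) (r_lt1 : r < 1).
Variables T Ti : bop H.
Hypotheses (T_Ti : forall x, T (Ti x) = x) (Ti_T : forall x, Ti (T x) = x).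
Hypothesis T_contraction : forall x, nrm (T x) <= nrm x.
Hypothesis rTi_contraction : forall x, r * nrm (Ti x) <= nrm x.

Lemma C1r_adjoint_mul_bounds (Ta : bop H) : (forall x y, ip (T x) y = ip x (Ta y)) ->
  forall x, r ^+ 2 * nrm x ^+ 2 <= complex.Re (ip (Ta (T x)) x) <= 1 * nrm x ^+ 2.
Proof.
move=> T_adj x; rewrite Re_ipC -T_adj -hnorm_sqr mul1r.
have := rTi_contraction (T x); rewrite Ti_T => lo.
rewrite -exprMn !ler_pXn2r ?nnegrE ?mulr_ge0 ?hnorm_ge0 ?(ltW r_gt0) //.
by rewrite lo T_contraction.
Qed.

Lemma bop_C1r_dilation : exists (K : Hilbert R) (V : H -> K) (J : K -> K),
  hisometry V /\ invertible_op J /\ calC1r r J /\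
  exists Vs : K -> H, is_adjoint V Vs /\
    forall (n : int) (Ti' : H -> H) (Ji : K -> K),
      is_inverse T Ti' -> is_inverse J Ji ->
      forall x : H, zpow T Ti' n x = Vs (zpow J Ji n (V x)).
Proof.
have [Ta T_adj] := adjoint_exists T; have [Tia Ti_adj] := adjoint_exists Ti.
have TaT_sa x y : ip (Ta (T x)) y = ip x (Ta (T y)).
  by rewrite -T_adj hinnerC -T_adj -hinnerC.
have r2_lt1 : r ^+ 2 < 1 by rewrite expr_lt1 // ltW.
have [D [D_sa D_comm D_sqr]] :=
  defect_exists (S := bop_comp Ta T) r2_lt1 TaT_sa (C1r_adjoint_mul_bounds T_adj).
have {}D_sqr x : D (D x) = Ta (T x) - Ta (T (Ta (T x))) - (r ^+ 2)%:C%C *: (x - Ta (T x)).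
  by rewrite D_sqr; apply: ip_eql => z; rewrite /= !(ipDl, ipBl, ipNl, ipZl); ring.
have Jinv := dilation_is_inverse r_gt0 r_lt1 D T_Ti Ti_T T_adj Ti_adj.
exists (dsum H), (@embed R H), (dilation r T Tia D); split; first exact: embed_hisometry.
split; first by exists (dilation_inv r Ti Ta Tia D).
split; first exact (dilation_calC1r r_gt0 r_lt1 T_Ti Ti_T T_adj Ti_adj D_sa D_comm D_sqr).
exists (fun u => u.1); split; first exact: embed_adjoint.
move=> n Ti' Ji hTi' hJi x; apply: embed_zpow => y; first exact: dilation_embed.
rewrite (is_inverse_unique Jinv hJi) dilation_inv_embed.
by rewrite (is_inverse_unique hTi' (bop_is_inverse Ti_T T_Ti)).
Qed.

End Forward.

Lemma C1r_dilation (R : realType) (r : R) (H : Hilbert R) (T : H -> H) :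
  0 < r -> r < 1 -> C1r r T ->
  exists (K : Hilbert R) (V : H -> K) (J : K -> K),
    hisometry V /\ invertible_op J /\ calC1r r J /\
    exists Vs : K -> H, is_adjoint V Vs /\
      forall (n : int) (Ti : H -> H) (Ji : K -> K),
        is_inverse T Ti -> is_inverse J Ji ->
        forall x : H, zpow T Ti n x = Vs (zpow J Ji n (V x)).
Proof.
move=> r_gt0 r_lt1 [S [[/bounded_opP [T_lin T_bnd] [/bounded_opP [S_lin S_bnd] [ST TS]]] [hT hS]]].
have T_contraction x : hnorm (T x) <= hnorm x by rewrite -[leRHS]mul1r.
have rS_contraction x : r * hnorm (S x) <= hnorm x.
  by have := hS x; rewrite hnormCZ ger0_norm ?mul1r // ltW.
exact: (@bop_C1r_dilation R H r r_gt0 r_lt1 (BOp T_lin T_bnd) (BOp S_lin S_bnd)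
  TS ST T_contraction rS_contraction).
Qed.

Lemma orth_proj_Re_ip (R : realType) (K : Hilbert R) (P : K -> K) :
  orth_proj P -> forall z, complex.Re (hinner z (P z)) = hnorm (P z) ^+ 2.
Proof. by case=> _ [idem sa] z; rewrite /inner in sa; rewrite hnorm_sqr sa idem. Qed.

Lemma calC1r_bounds (R : realType) (r : R) (K : Hilbert R) (J : K -> K) :
  0 <= r -> r <= 1 -> calC1r r J -> forall z, r * hnorm z <= hnorm (J z) <= hnorm z.
Proof.
move=> r0 r1 [_ [Js [P0 [P1 [[_ [_ J_adj]] [hP0 [hP1 [P01 JsJ]]]]]]]] z.
rewrite /inner in J_adj.
have nJz : hnorm (J z) ^+ 2 = hnorm (P0 z) ^+ 2 + r ^+ 2 * hnorm (P1 z) ^+ 2.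
  rewrite hnorm_sqr J_adj JsJ ipDr ipZr conjC_real ReD ReCM.
  by rewrite !orth_proj_Re_ip.
have nz : hnorm z ^+ 2 = hnorm (P0 z) ^+ 2 + hnorm (P1 z) ^+ 2.
  by rewrite hnorm_sqr -{2}(P01 z) ipDr ReD !orth_proj_Re_ip.
have r2 : r ^+ 2 <= 1 by rewrite expr_le1.
have P0r : r ^+ 2 * hnorm (P0 z) ^+ 2 <= hnorm (P0 z) ^+ 2 by rewrite ler_piMl ?sqr_ge0.
have P1r : r ^+ 2 * hnorm (P1 z) ^+ 2 <= hnorm (P1 z) ^+ 2 by rewrite ler_piMl ?sqr_ge0.
apply/andP; split; rewrite -(ler_pXn2r (n := 2)) ?nnegrE ?mulr_ge0 ?hnorm_ge0 //.
  by rewrite exprMn nJz nz; lra.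
by rewrite nJz nz; lra.
Qed.

Lemma compression_C1r (R : realType) (r : R) (H K : Hilbert R) (T Ti : H -> H)
    (V : H -> K) (Vs : K -> H) (J Ji : K -> K) :
  0 <= r -> r <= 1 -> hisometry V -> is_adjoint V Vs -> calC1r r J ->
  is_inverse J Ji -> is_inverse T Ti ->
  (forall (n : int) x, zpow T Ti n x = Vs (zpow J Ji n (V x))) -> C1r r T.
Proof.
move=> r0 r1 [_ V_iso] [_ [_ V_adj]] hJ hJi hTi hpow.
have Vs_contraction y : hnorm (Vs y) <= hnorm y.
  rewrite -[leRHS]mul1r; apply: (adjoint_bounded ler01 _ V_adj) => x.
  by rewrite V_iso mul1r.
have J_bounds := calC1r_bounds r0 r1 hJ.
exists Ti; split=> //; split=> x; rewrite mul1r.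
  have /= -> := hpow 1 x; apply: le_trans (Vs_contraction _) _.
  by rewrite -(V_iso x); case/andP: (J_bounds (V x)).
have /= -> := hpow (Negz 0) x; rewrite hnormCZ ger0_norm //; case: hJi => _ [_ [_ J_Ji]].
apply: le_trans (_ : r * hnorm (Ji (V x)) <= _).
  by apply: ler_wpM2l => //; apply: Vs_contraction.
by case/andP: (J_bounds (Ji (V x))); rewrite J_Ji V_iso.
Qed.

Theorem theorem2p4 (R : realType) (r : R) (H : Hilbert R) (T : H -> H) :
  0 < r < 1 -> invertible_op T ->
  (C1r r T <->
   exists (K : Hilbert R) (V : H -> K) (J : K -> K),
     hisometry V /\ invertible_op J /\ calC1r r J /\
     exists Vs : K -> H, is_adjoint V Vs /\
       forall (n : int) (Ti : H -> H) (Ji : K -> K),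
         is_inverse T Ti -> is_inverse J Ji ->
         forall x : H, zpow T Ti n x = Vs (zpow J Ji n (V x))).
Proof.
move=> /andP [r_gt0 r_lt1] [Ti hTi]; split; first exact: C1r_dilation.
case=> K [V [J [hV [[Ji hJi] [hJ [Vs [hVs hpow]]]]]]].
exact: (compression_C1r (ltW r_gt0) (ltW r_lt1) hV hVs hJ hJi hTi (fun n => hpow n Ti Ji hTi hJi)).
Qed.
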